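(* Let $G$ be a simple graph with $\mathcal{H}$-eigenvalues $\lambda_1\ge\lambda_2\ge\cdots\ge\lambda_m$. If $G$ contains a clique $K_t$ (with $t\ge 2$), then $\lambda_{\binom{t}{2}}\ge t$. In particular, if the clique number of $G$ is $\omega$, then $\lambda_{\binom{\omega}{2}}\ge\omega$.
   Context: Graphs are simple with at least one edge. For an oriented edge $e$ write $e^-$ for its tail and $e^+$ for its head. For distinct edges $e,e'$: $e\leftrightarrow e'$ means $e^+=e'^-$ or $e'^+=e^-$; $e\overset{\pm}{\sim}e'$ means $e^+=e'^+$ or $e^-=e'^-$; $e\vartriangle e'$ means $e,e'$ are two edges of a common triangle. $\triangle(e)$ is the number of triangles containing $e$. The Helmholtzian matrix $\mathcal{H}(G)=(h_{ee'})$ is indexed by edges, with $h_{ee}=\triangle(e)+2$, and for $e\ne e'$: $h_{ee'}=-1$ if $e\leftrightarrow e'$ and not $e\vartriangle e'$; $h_{ee'}=1$ if $e\overset{\pm}{\sim}e'$ and not $e\vartriangle e'$; $h_{ee'}=0$ otherwise. The $\mathcal{H}$-eigenvalues of $G$ are the eigenvalues of $\mathcal{H}(G)$ for an arbitrary edge orientation (independent of the orientation), listed in non-increasing order. *)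

From HB Require Import structures.
From mathcomp Require Import all_boot all_order all_algebra.
From mathcomp Require Import polyrcf.
Set Implicit Arguments. Unset Strict Implicit. Unset Printing Implicit Defensive.
Import Order.TTheory GRing.Theory Num.Theory.
Local Open Scope ring_scope.

Definition simple_graph (V : finType) (adj : rel V) : Prop :=
  (forall x y, adj x y = adj y x) /\ (forall x, ~~ adj x x).

Definition has_edge (V : finType) (adj : rel V) : Prop := exists x y, adj x y.

Definition orientation (V : finType) (adj : rel V) (E : {set V * V}) : Prop :=
  (forall e, e \in E -> adj e.1 e.2) /\
  (forall x y, adj x y -> ((x, y) \in E) (+) ((y, x) \in E)).

Definition tail (V : finType) (e : V * V) := e.1.
Definition head (V : finType) (e : V * V) := e.2.

Definition arrow_rel (V : finType) (e e' : V * V) : bool :=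
  (head e == tail e') || (head e' == tail e).
Definition pm_rel (V : finType) (e e' : V * V) : bool :=
  (head e == head e') || (tail e == tail e').

Definition is_triangle (V : finType) (adj : rel V) (T : {set V}) : bool :=
  (#|T| == 3)%N && [forall x in T, forall y in T, (x != y) ==> adj x y].

Definition ends (V : finType) (e : V * V) : {set V} := [set e.1; e.2].

Definition tri_rel (V : finType) (adj : rel V) (e e' : V * V) : bool :=
  [exists T : {set V}, [&& is_triangle adj T, ends e \subset T & ends e' \subset T]].

Definition ntri (V : finType) (adj : rel V) (e : V * V) : nat :=
  #|[set T : {set V} | is_triangle adj T && (ends e \subset T)]|.

Definition h_entry (R : pzRingType) (V : finType) (adj : rel V) (e e' : V * V) : R :=
  if e == e' then (ntri adj e + 2)%:R
  else if arrow_rel e e' && ~~ tri_rel adj e e' then -1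
  else if pm_rel e e' && ~~ tri_rel adj e e' then 1
  else 0.

Definition helmholtzian (R : pzRingType) (V : finType) (adj : rel V)
    (E : {set V * V}) : 'M[R]_#|E| :=
  \matrix_(i, j) h_entry R adj (enum_val i) (enum_val j).

Definition real_eigenvalues (R : rcfType) (n : nat) (A : 'M[R]_n) : seq R :=
  let p := char_poly A in
  sort (fun x y : R => y <= x) (flatten [seq nseq (mup x p) x | x <- rootsR p]).

(* lambda_k, 1-indexed. *)
Definition H_eigenvalue (R : rcfType) (V : finType) (adj : rel V)
    (E : {set V * V}) (k : nat) : R :=
  nth 0 (real_eigenvalues (helmholtzian R adj E)) k.-1.

Definition is_clique (V : finType) (adj : rel V) (K : {set V}) : bool :=
  [forall x in K, forall y in K, (x != y) ==> adj x y].

Definition clique_number (V : finType) (adj : rel V) : nat :=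
  \max_(K : {set V} | is_clique adj K) #|K|.

(* The C(t,2) edges of a t-clique K index a principal submatrix of the
   Helmholtzian which is diagonal: two of these edges sharing a vertex lie in a
   common triangle of K, so their entry vanishes, and each lies in at least
   t - 2 triangles of K, so its diagonal entry is at least t.  A real symmetric
   matrix with an s x s diagonal principal submatrix whose entries are at
   least c has at least s eigenvalues >= c (Courant-Fischer): otherwise the
   span of these s coordinate vectors meets the span of the eigenvectors with
   eigenvalues < c, and the quadratic form at a common nonzero vector v is
   both >= c |v|^2 and < c |v|^2.  The eigenvectors live over R[i], where the
   spectral theorem for Hermitian matrices is available. *)

From Pilot Require Import Defs.
From HB Require Import structures.
From mathcomp Require Import all_boot all_order all_algebra.
From mathcomp Require Import polyrcf complex zify.
Set Implicit Arguments. Unset Strict Implicit. Unset Printing Implicit Defensive.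
Import Order.TTheory GRing.Theory Num.Theory.
Local Open Scope ring_scope.
Local Open Scope sesquilinear_scope.

Section DiagonalForm.
Variable C : numClosedFieldType.

Lemma diag_form_sum k (x : 'rV[C]_k) (M : 'M[C]_k) : is_diag_mx M ->
  (x *m M *m x^t*) 0 0 = \sum_i M i i * `|x 0 i| ^+ 2.
Proof.
move=> /is_diag_mxP Md; rewrite mxE; apply: eq_bigr => j _; rewrite !mxE.
rewrite (bigD1 j) //= big1 ?addr0 => [|i ij]; last by rewrite Md ?mulr0.
by rewrite normCK mulrAC mulrC.
Qed.

Lemma dnorm_sum k (x : 'rV[C]_k) : (x *m x^t*) 0 0 = \sum_i `|x 0 i| ^+ 2.
Proof.
rewrite -[x in x *m _]mulmx1 diag_form_sum ?scalar_mx_is_diag //.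
by apply: eq_bigr => i _; rewrite mxE eqxx mulr1n mul1r.
Qed.

Lemma diag_form_ge k (x : 'rV[C]_k) (M : 'M[C]_k) (c : C) :
  is_diag_mx M -> (forall i, c <= M i i) ->
  c * (x *m x^t*) 0 0 <= (x *m M *m x^t*) 0 0.
Proof.
move=> Md Mc; rewrite diag_form_sum // dnorm_sum mulr_sumr.
by apply: ler_sum => i _; rewrite ler_wpM2r ?exprn_ge0.
Qed.

Lemma diag_form_lt k (x : 'rV[C]_k) (M : 'M[C]_k) (c : C) :
  is_diag_mx M -> (forall i, M i i < c) -> x != 0 ->
  (x *m M *m x^t*) 0 0 < c * (x *m x^t*) 0 0.
Proof.
move=> Md Mc x0; rewrite diag_form_sum // dnorm_sum mulr_sumr -subr_gt0 -sumrB.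
under eq_bigr do rewrite -mulrBl.
have [i xi0] : exists i, x 0 i != 0.
  apply/existsP; apply: contraNT x0 => /existsPn xN0.
  by apply/eqP/rowP => i; rewrite mxE; apply/eqP/negbNE/xN0.
rewrite (bigD1 i) //= ltr_wpDr //.
  by rewrite sumr_ge0 // => j _; rewrite mulr_ge0 ?exprn_ge0 // subr_ge0 ltW.
by rewrite mulr_gt0 ?exprn_gt0 ?normr_gt0 // subr_gt0.
Qed.

End DiagonalForm.

Section CourantFischer.
Variable C : numClosedFieldType.

Lemma unitarymx1 n : (1%:M : 'M[C]_n) \is unitarymx.
Proof. by apply/unitarymxP; rewrite trmx1 map_mx1 mulmx1. Qed.

Lemma rowsub_unitarymx m n k (f : 'I_k -> 'I_m) (M : 'M[C]_(m, n)) :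
  injective f -> M \is unitarymx -> rowsub f M \is unitarymx.
Proof.
move=> f_inj /row_unitarymxP Mu; apply/row_unitarymxP => i j.
by rewrite !row_rowsub Mu (inj_eq f_inj).
Qed.

Lemma form_mulmx m n (a : 'rV[C]_m) (U : 'M[C]_(m, n)) (M : 'M[C]_n) :
  (a *m U) *m M *m (a *m U)^t* = a *m (U *m M *m U^t*) *m a^t*.
Proof. by rewrite trmx_mul map_mxM !mulmxA. Qed.

Lemma dnorm_unitarymx m n (a : 'rV[C]_m) (U : 'M[C]_(m, n)) :
  U \is unitarymx -> (a *m U) *m (a *m U)^t* = a *m a^t*.
Proof. by move=> Uu; rewrite trmx_mul map_mxM mulmxA mulmxtVK. Qed.

Lemma rowsub_form m n k (f : 'I_k -> 'I_m) (A : 'M[C]_(m, n)) (M : 'M[C]_n) :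
  rowsub f A *m M *m (rowsub f A)^t* = mxsub f f (A *m M *m A^t*).
Proof.
rewrite mxsub_mul -mul_rowsub_mx; congr (_ *m _).
by apply/matrixP => i j; rewrite !mxE.
Qed.

Lemma unitarymx_common_row p q n (U : 'M[C]_(p, n)) (W : 'M[C]_(q, n)) :
  U \is unitarymx -> W \is unitarymx -> (n < p + q)%N ->
  exists (a : 'rV_p) (b : 'rV_q), a != 0 /\ a *m U = b *m W.
Proof.
move=> Uu Wu npq.
have capN0 : (U :&: W)%MS != 0.
  rewrite -mxrank_eq0 -lt0n.
  have := mxrank_sum_cap U W; rewrite (mxrank_unitary Uu) (mxrank_unitary Wu).
  have := rank_leq_col (U + W)%MS; lia.
set v := nz_row (U :&: W)%MS.
have vN0 : v != 0 by rewrite nz_row_eq0.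
have /submxP[a va] : (v <= U)%MS by apply: submx_trans (nz_row_sub _) (capmxSl _ _).
have /submxP[b vb] : (v <= W)%MS by apply: submx_trans (nz_row_sub _) (capmxSr _ _).
exists a, b; split; last by rewrite -va.
by apply: contraNneq vN0 => a0; rewrite va a0 mul0mx.
Qed.

Lemma card_diag_block_le n (P : 'M[C]_n) (d : 'rV[C]_n) (H : 'M[C]_n)
    (S : {set 'I_n}) (c : C) :
  P \is unitarymx -> H = P^t* *m diag_mx d *m P ->
  d \is a realmx -> c \is Num.real ->
  (forall i j, i \in S -> j \in S -> i != j -> H i j = 0) ->
  (forall i, i \in S -> c <= H i i) ->
  (#|S| <= #|[set i | (c <= d 0 i)%R]|)%N.
Proof.
move=> Pu HE /mxOverP dR cR Hoff Hdiag; set K := [set i | _].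
rewrite leqNgt; apply/negP => ltKS.
pose fN (i : 'I_#|~: K|) := enum_val i.
pose fS (i : 'I_#|S|) := enum_val i.
have fN_inj : injective fN := @enum_val_inj _ _.
have fS_inj : injective fS := @enum_val_inj _ _.
have ltn : (n < #|~: K| + #|S|)%N.
  by have := cardsC K; rewrite card_ord; lia.
have [a [b [a0 ab]]] := unitarymx_common_row
  (rowsub_unitarymx fN_inj Pu) (rowsub_unitarymx fS_inj (unitarymx1 n)) ltn.
set v := a *m rowsub fN P.
have PHP : P *m H *m P^t* = diag_mx d.
  by rewrite HE !mulmxA (unitarymxP Pu) mul1mx mulmxtVK.
have lt_c : (v *m H *m v^t*) 0 0 < c * (v *m v^t*) 0 0.
  rewrite dnorm_unitarymx ?rowsub_unitarymx // form_mulmx rowsub_form PHP.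
  apply: diag_form_lt => // [|i].
  - apply/is_diag_mxP => i j ij.
    by rewrite !mxE (inj_eq fN_inj) -val_eqE (negPf ij).
  - by have := enum_valP i; rewrite !mxE eqxx mulr1n !inE real_ltNge.
have ge_c : c * (v *m v^t*) 0 0 <= (v *m H *m v^t*) 0 0.
  rewrite /v ab dnorm_unitarymx ?rowsub_unitarymx ?unitarymx1 //.
  rewrite form_mulmx rowsub_form trmx1 map_mx1 mulmx1 mul1mx.
  apply: diag_form_ge => [|i]; last by rewrite mxE Hdiag ?enum_valP.
  apply/is_diag_mxP => i j ij; rewrite mxE Hoff ?enum_valP //.
  by rewrite (inj_eq fS_inj) -val_eqE.
by have := le_lt_trans ge_c lt_c; rewrite ltxx.
Qed.

End CourantFischer.

Lemma char_poly_similar (F : comNzRingType) n (Q D P : 'M[F]_n) :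
  Q *m P = 1%:M -> char_poly (Q *m D *m P) = char_poly D.
Proof.
move=> QP; pose mxC := @map_mx _ _ (@polyC F) n n.
have mxC_QP : mxC Q *m mxC P = 1%:M by rewrite -map_mxM QP map_mx1.
rewrite /char_poly.
have -> : char_poly_mx (Q *m D *m P) = mxC Q *m char_poly_mx D *m mxC P.
  rewrite /char_poly_mx mulmxBr mulmxBl !map_mxM; congr (_ - _).
  by rewrite mul_mx_scalar -scalemxAl mxC_QP scalemx1.
by rewrite !det_mulmx mulrAC -det_mulmx mxC_QP det1 mul1r.
Qed.

Lemma sumn_pred1_uniq (T : eqType) (s : seq T) (f : T -> nat) y : uniq s ->
  sumn [seq (x == y) * f x | x <- s]%N = ((y \in s) * f y)%N.
Proof.
elim: s => [|x s IHs] //= /andP[xNs s_uniq]; rewrite IHs // in_cons.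
by have [<-|] := eqVneq x y; rewrite ?(negPf xNs) /= ?addn0.
Qed.

Lemma sorted_nth_ge (R : realDomainType) (s : seq R) (c : R) k :
  sorted >=%R s -> (k < count (>= c)%R s)%N -> c <= nth 0 s k.
Proof.
elim: s k => [|x s IHs] [|k] //= s_sorted; last first.
  move=> ltk; apply: IHs (path_sorted s_sorted) _.
  by case: (c <= x) ltk => /= ltk; lia.
have /allP x_max := order_path_min (rev_trans le_trans) s_sorted.
have [//|cNx] := boolP (c <= x); rewrite /= -has_count => /hasP[y ys cy].
by move: cNx; rewrite (le_trans cy (x_max y ys)).
Qed.

Section RealSymmetric.
Variable R : rcfType.
Local Notation toC := (real_complex R).

Lemma toC_real (x : R) : toC x \is Num.real.
Proof. by apply/complex_realP; exists x. Qed.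

Lemma symmetric_spectral n (A : 'M[R]_n) : A^T = A ->
  exists r : 'I_n -> R, exists2 P : 'M[R[i]]_n, P \is unitarymx &
    map_mx toC A = P^t* *m diag_mx (\row_i toC (r i)) *m P.
Proof.
move=> A_sym; set AC := map_mx toC A.
have AC_herm : AC \is hermsymmx.
  apply: realsym_hermsym; last by apply/mxOverP => i j; rewrite mxE toC_real.
  by apply/is_hermitianmxP; rewrite expr0 scale1r map_mx_id // /AC map_trmx A_sym.
have /hermitian_normalmx/orthomx_spectralP AC_spec := AC_herm.
have /mxOverP d_real := hermitian_spectral_diag_real AC_herm.
exists (fun i => complex.Re (spectral_diag AC 0 i)), (spectralmx AC).
  exact: spectral_unitarymx.
rewrite {1}AC_spec invmx_unitary ?spectral_unitarymx //; congr (_ *m _ *m _).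
by congr diag_mx; apply/rowP => i; rewrite mxE RRe_real.
Qed.

Lemma char_poly_spectral n (A : 'M[R]_n) (r : 'I_n -> R) (P : 'M[R[i]]_n) :
  P \is unitarymx -> map_mx toC A = P^t* *m diag_mx (\row_i toC (r i)) *m P ->
  char_poly A = \prod_i ('X - (r i)%:P).
Proof.
move=> Pu AE; apply: (@map_poly_inj _ _ toC).
rewrite map_char_poly AE char_poly_similar; last first.
  by rewrite -invmx_unitary // mulVmx // unitarymx_unit.
rewrite char_poly_trig ?diag_mx_is_trig // rmorph_prod; apply: eq_bigr => i _.
by rewrite !mxE eqxx mulr1n rmorphB /= map_polyX map_polyC.
Qed.

Lemma perm_real_eigenvalues n (A : 'M[R]_n) (r : 'I_n -> R) :
  char_poly A = \prod_i ('X - (r i)%:P) ->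
  perm_eq (real_eigenvalues A) [seq r i | i <- enum 'I_n].
Proof.
rewrite /real_eigenvalues => AE; set p := char_poly A.
set rs := [seq r i | i <- enum 'I_n].
have pE : p = \prod_(y <- rs) ('X - y%:P) by rewrite /p AE big_map big_enum.
have pN0 : p != 0.
  by rewrite pE prodf_seq_neq0; apply/allP => y _; rewrite polyXsubC_eq0.
rewrite perm_sort; apply/allP => y _; apply/eqP.
rewrite count_flatten -map_comp.
under eq_map => x do rewrite /= count_nseq.
rewrite sumn_pred1_uniq ?uniq_roots //.
have := roots_on_rootsR pN0 y; rewrite in_itv /= => <-.
have [py|pNy] := boolP (root p y); first by rewrite mul1n pE mu_prod_XsubC.
by rewrite mul0n -(mu_prod_XsubC y rs) -pE mupNroot.
Qed.

Lemma real_eigenvalue_ge_diag_block n (A : 'M[R]_n) (S : {set 'I_n}) (c : R) k :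
  A^T = A ->
  (forall i j, i \in S -> j \in S -> i != j -> A i j = 0) ->
  (forall i, i \in S -> c <= A i i) ->
  (0 < k <= #|S|)%N ->
  c <= nth 0 (real_eigenvalues A) k.-1.
Proof.
move=> A_sym Aoff Adiag /andP[k_gt0 le_kS].
have [r [P Pu AE]] := symmetric_spectral A_sym.
apply: sorted_nth_ge; first by apply: sort_sorted => x y; apply: le_total.
rewrite (permP (perm_real_eigenvalues (char_poly_spectral Pu AE))) count_map.
have le_S : (#|S| <= #|[set i | (c <= r i)%R]|)%N.
  have -> : [set i | (c <= r i)%R] = [set i | (toC c <= (\row_i toC (r i)) 0 i)%R].
    by apply/setP => i; rewrite !inE mxE lecR.
  apply: card_diag_block_le Pu AE _ (toC_real c) _ _.
  - by apply/mxOverP => i j; rewrite mxE toC_real.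
  - by move=> i j iS jS ij; rewrite mxE Aoff.
  - by move=> i iS; rewrite mxE lecR Adiag.
rewrite (prednK k_gt0); apply: leq_trans le_kS (leq_trans le_S _).
by rewrite cardsE cardE size_filter enumT.
Qed.

End RealSymmetric.

Lemma tri_rel_sym (V : finType) (adj : rel V) (e e' : V * V) :
  tri_rel adj e e' = tri_rel adj e' e.
Proof. by apply/existsP/existsP => -[T /and3P[? ? ?]]; exists T; apply/and3P. Qed.

Lemma h_entry_sym (R : pzRingType) (V : finType) (adj : rel V) (e e' : V * V) :
  h_entry R adj e e' = h_entry R adj e' e.
Proof.
rewrite /h_entry eq_sym tri_rel_sym.
have -> : arrow_rel e e' = arrow_rel e' e by rewrite /arrow_rel orbC.
have -> : pm_rel e e' = pm_rel e' e.
  by rewrite /pm_rel /Defs.head /Defs.tail (eq_sym e.2) (eq_sym e.1).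
by case: eqP => // ->.
Qed.

Lemma tr_helmholtzian (R : pzRingType) (V : finType) (adj : rel V)
    (E : {set V * V}) :
  (helmholtzian R adj E)^T = helmholtzian R adj E.
Proof. by apply/matrixP => i j; rewrite !mxE h_entry_sym. Qed.

Section Cliques.
Variables (V : finType) (adj : rel V) (E : {set V * V}).
Hypotheses (adj_simple : simple_graph adj) (E_orient : orientation adj E).

Lemma clique_adj (K : {set V}) x y :
  is_clique adj K -> x \in K -> y \in K -> x != y -> adj x y.
Proof.
move=> /forallP/(_ x)/implyP K_clique /K_clique/forallP/(_ y)/implyP.
by move=> Ky /Ky/implyP.
Qed.

Lemma subset_clique (T K : {set V}) :
  T \subset K -> is_clique adj K -> is_clique adj T.
Proof.
move=> /subsetP TK K_clique; apply/forallP => x; apply/implyP => xT.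
apply/forallP => y; apply/implyP => yT; apply/implyP.
by apply: clique_adj K_clique _ _; apply: TK.
Qed.

Lemma clique_pair x y : adj x y -> is_clique adj [set x; y].
Proof.
have [adj_sym _] := adj_simple; move=> xy.
apply/forallP => u; apply/implyP => u_xy; apply/forallP => v; apply/implyP.
move: u_xy; rewrite !inE => /orP[]/eqP-> /orP[]/eqP->; apply/implyP;
by rewrite ?eqxx // adj_sym.
Qed.

Lemma edge_neq e : e \in E -> e.1 != e.2.
Proof.
have [_ adj_irr] := adj_simple; move=> /(proj1 E_orient) e_adj.
by apply: contraTneq e_adj => ->; rewrite (negPf (adj_irr _)).
Qed.

Lemma card_ends e : e \in E -> #|ends e| = 2.
Proof. by move=> /edge_neq; rewrite /ends cards2 => ->. Qed.

Lemma ends_inj : {in E &, injective (@ends V)}.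
Proof.
move=> [x y] [x' y'] eE e'E /setP eq_ends; have /= xNy := edge_neq eE.
have /set2P[ex | ex] : x \in [set x'; y'] by rewrite -eq_ends set21.
all: have /set2P[ey | ey] : y \in [set x'; y'] by rewrite -eq_ends set22.
all: subst x y; rewrite ?eqxx // in xNy *.
have := proj2 E_orient _ _ (proj1 E_orient _ e'E).
by rewrite eE e'E.
Qed.

Lemma ends_meet (e e' : V * V) :
  arrow_rel e e' || pm_rel e e' -> ~~ [disjoint ends e & ends e'].
Proof.
rewrite -setI_eq0; case: e e' => [x y] [x' y'].
rewrite /arrow_rel /pm_rel /Defs.head /Defs.tail /=.
case/orP=> /orP[] /eqP e_eq; apply/set0Pn;
  [exists y | exists x | exists y | exists x]; by rewrite !inE e_eq !eqxx ?orbT.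
Qed.

Lemma tri_rel_clique (K : {set V}) e e' :
  is_clique adj K -> e \in E -> e' \in E -> e != e' ->
  ends e \subset K -> ends e' \subset K -> ~~ [disjoint ends e & ends e'] ->
  tri_rel adj e e'.
Proof.
move=> K_clique eE e'E e_neq eK e'K meet.
apply/existsP; exists (ends e :|: ends e'); rewrite subsetUl subsetUr !andbT.
apply/andP; split; last by apply: subset_clique K_clique; rewrite subUset eK.
have cap_gt0 : (0 < #|ends e :&: ends e'|)%N by rewrite card_gt0 setI_eq0.
have cap_lt2 : (#|ends e :&: ends e'| < 2)%N.
  rewrite ltnNge; apply: contra e_neq => cap_ge2; apply/eqP/ends_inj => //.
  have sub_e : ends e \subset ends e'.
    by apply/setIidPl/eqP; rewrite eqEcard subsetIl card_ends.
  by apply/eqP; rewrite eqEcard sub_e !card_ends.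
by rewrite cardsU !card_ends //; apply/eqP; lia.
Qed.

Lemma h_entry_clique (R : pzRingType) (K : {set V}) e e' :
  is_clique adj K -> e \in E -> e' \in E -> e != e' ->
  ends e \subset K -> ends e' \subset K -> h_entry R adj e e' = 0.
Proof.
move=> K_clique eE e'E e_neq eK e'K; rewrite /h_entry (negPf e_neq).
case: (boolP (tri_rel adj e e')) => [_|tNrel]; first by rewrite /= !andbF.
have : ~~ (arrow_rel e e' || pm_rel e e').
  apply: contra tNrel => /ends_meet.
  exact: tri_rel_clique K_clique _ _ _ eK e'K.
by rewrite negb_or => /andP[/negPf-> /negPf->].
Qed.

Lemma ntri_clique (K : {set V}) e :
  is_clique adj K -> e \in E -> ends e \subset K -> (#|K| - 2 <= ntri adj e)%N.
Proof.
move=> K_clique eE eK; set B := K :\: ends e.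
have -> : (#|K| - 2 = #|B|)%N by rewrite cardsD (setIidPr eK) card_ends.
have add_inj : {in B &, injective (fun z => z |: ends e)}.
  move=> z z' /setDP[_ zNe] _ eq_zz'.
  have : z \in z' |: ends e by rewrite -eq_zz' setU11.
  by rewrite in_setU1 (negPf zNe) orbF => /eqP.
rewrite -(card_in_imset add_inj); apply: subset_leq_card.
apply/subsetP => _ /imsetP[z /setDP[zK zNe] ->]; rewrite inE subsetUr andbT.
rewrite /is_triangle cardsU1 zNe card_ends //=.
by apply: subset_clique K_clique; rewrite subUset sub1set zK.
Qed.

Lemma ends_orientation x y :
  adj x y -> exists2 e, e \in E & ends e = [set x; y].
Proof.
move=> xy; have := proj2 E_orient x y xy.
have [xyE _|_ /= yxE] := boolP ((x, y) \in E); first by exists (x, y).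
by exists (y, x); rewrite // /ends setUC.
Qed.

Lemma card_clique_edges (K : {set V}) : is_clique adj K ->
  ('C(#|K|, 2) <= #|[set i : 'I_#|E| | ends (enum_val i) \subset K]|)%N.
Proof.
move=> K_clique; rewrite -cards_draws.
apply: leq_trans (leq_imset_card (fun i => ends (enum_val i)) _).
apply: subset_leq_card; apply/subsetP => B; rewrite inE => /andP[BK].
case/cards2P=> [x [y [xNy B_xy]]]; subst B.
have [xK yK] : x \in K /\ y \in K by rewrite !(subsetP BK) ?set21 ?set22.
have [e eE ends_e] := ends_orientation (clique_adj K_clique xK yK xNy).
by apply/imsetP; exists (enum_rank_in eE e); rewrite ?inE enum_rankK_in ?ends_e.
Qed.

Lemma clique_number_attained :
  exists2 K : {set V}, is_clique adj K & #|K| = clique_number adj.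
Proof.
have set0_clique : is_clique adj set0 by apply/forallP => z; rewrite inE.
have cliques_gt0 : (0 < #|[pred K : {set V} | is_clique adj K]|)%N.
  by apply/card_gt0P; exists set0.
have [K K_clique K_max] := eq_bigmax_cond (fun K : {set V} => #|K|) cliques_gt0.
by exists K => //; rewrite -K_max.
Qed.

Lemma clique_number_ge2 : has_edge adj -> (2 <= clique_number adj)%N.
Proof.
have [_ adj_irr] := adj_simple; move=> [x [y xy]].
have xNy : x != y by apply: contraTneq xy => ->; rewrite (negPf (adj_irr y)).
have := leq_bigmax_cond (F := fun K : {set V} => #|K|) _ (clique_pair xy).
by rewrite cards2 xNy.
Qed.

End Cliques.

Theorem corollary4p3 (R : rcfType) (V : finType) (adj : rel V) (E : {set V * V}) :
  simple_graph adj -> has_edge adj -> orientation adj E ->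
  (forall (t : nat) (K : {set V}), (2 <= t)%N -> is_clique adj K -> #|K| = t ->
     t%:R <= H_eigenvalue R adj E 'C(t, 2)) /\
  (clique_number adj)%:R <= H_eigenvalue R adj E 'C(clique_number adj, 2).
Proof.
move=> adj_simple adj_edge E_orient.
have clique_bound t (K : {set V}) : (2 <= t)%N -> is_clique adj K -> #|K| = t ->
    t%:R <= H_eigenvalue R adj E 'C(t, 2).
  move=> t_ge2 K_clique K_card; subst t.
  apply: (real_eigenvalue_ge_diag_block (S := [set i | ends (enum_val i) \subset K])).
  - exact: tr_helmholtzian.
  - move=> i j; rewrite !inE mxE => iK jK ij.
    have := h_entry_clique adj_simple E_orient R K_clique (enum_valP i) (enum_valP j).
    by apply; rewrite ?(inj_eq enum_val_inj).
  - move=> i; rewrite inE mxE /h_entry eqxx ler_nat => iK.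
    by have := ntri_clique adj_simple E_orient K_clique (enum_valP i) iK; lia.
  - by rewrite bin_gt0 t_ge2 (card_clique_edges E_orient K_clique).
split=> //; have [K K_clique K_card] := clique_number_attained adj.
by apply: clique_bound K_clique K_card; apply: clique_number_ge2.
Qed.
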